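(* Let $G \ge 2$ be an integer and $p_t \in (0,1)$. Let $r_{t,1},\dots,r_{t,G}$ be i.i.d. $\mathrm{Bernoulli}(p_t)$ random variables, let $R=\sum_{j=1}^G r_{t,j}$, $\hat p_t = R/G$, and for $i\in[G]$ let $\hat A_{t,i} = r_{t,i}-\hat p_t$ and $A_{t,i} = r_{t,i}-p_t$. Let $\mathcal S=\{1\le R\le G-1\}$. Then for every $i\in[G]$: $\mathbb E[\hat A_{t,i}-A_{t,i}\mid \mathcal S] < 0$ if $p_t<1/2$; $\mathbb E[\hat A_{t,i}-A_{t,i}\mid \mathcal S] > 0$ if $p_t>1/2$; and $\mathbb E[\hat A_{t,i}-A_{t,i}\mid \mathcal S] = 0$ if and only if $p_t=1/2$.
   Context: Setting: for a prompt, $G$ responses are sampled independently from a policy; each response gets a binary reward, modeled as i.i.d. Bernoulli with success probability $p_t$ (the expected reward). $\hat p_t$ is the group baseline, $\hat A_{t,i}$ the group-relative advantage, $A_{t,i}$ the expected advantage, and $\mathcal S$ the non-degenerate event that the group is neither all-correct nor all-incorrect. *)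

(* discrete probability on the finite sample space
   {ffun 'I_G -> bool} of reward vectors (r_1,...,r_G). *)
From mathcomp Require Import all_boot all_order all_algebra.
Unset Printing Implicit Defensive.
Import Order.TTheory GRing.Theory Num.Theory.
Local Open Scope ring_scope.

Section GRPO.
Variables (R : realFieldType) (G : nat).

Definition outcome := {ffun 'I_G -> bool}.

Definition bern_prob (p : R) (r : outcome) : R :=
  \prod_(j < G) (if r j then p else 1 - p).

Definition rew (r : outcome) (j : 'I_G) : R := (r j)%:R.

Definition nsucc (r : outcome) : nat := \sum_(j < G) nat_of_bool (r j).

Definition phat (r : outcome) : R := (nsucc r)%:R / G%:R.

Definition Ahat (i : 'I_G) (r : outcome) : R := rew r i - phat r.
Definition Aexp (p : R) (i : 'I_G) (r : outcome) : R := rew r i - p.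

Definition nondeg (r : outcome) : bool := (1 <= nsucc r <= G - 1)%N.

Definition cond_exp (p : R) (S : pred outcome) (X : outcome -> R) : R :=
  (\sum_(r | S r) bern_prob p r * X r) / (\sum_(r | S r) bern_prob p r).

End GRPO.

From mathcomp Require Import all_boot all_order all_algebra.
From mathcomp Require Import ring lra zify.
Import Order.TTheory GRing.Theory Num.Theory.
Local Open Scope ring_scope.

(* On S the gap is Ahat - A = p - phat. Over the whole sample space
   E[phat] = p, so E[(p - phat) 1_S] is minus the contribution of the two
   degenerate outcomes (all rewards 0, where phat = 0, and all rewards 1,
   where phat = 1), namely p^G (1 - p) - p (1 - p)^G
   = p (1 - p) (p^(G-1) - (1 - p)^(G-1)), whose sign is that of p - 1/2. *)

Lemma ltr_expr_mul_swap (R : numDomainType) (n : nat) (a b : R) :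
  (1 < n)%N -> 0 < a -> a < b -> a ^+ n * b < a * b ^+ n.
Proof.
case: n => [|n] // n_gt1 a_gt0 ab; rewrite !exprS mulrAC mulrA.
have b_gt0 : 0 < b := lt_trans a_gt0 ab.
by rewrite ltr_pM2l ?mulr_gt0 // ltrXn2r ?ltW // -lt0n.
Qed.

Section BernoulliGroup.
Variables (R : realFieldType) (G : nat).
Local Notation outcome := (outcome G).
Local Notation bern_prob := (@bern_prob R G).
Local Notation rew := (@rew R G).
Local Notation nsucc := (@nsucc G).
Local Notation phat := (@phat R G).
Local Notation nondeg := (@nondeg G).
Local Notation Ahat := (@Ahat R G).
Local Notation Aexp := (@Aexp R G).
Local Notation cond_exp := (@cond_exp R G).
Implicit Types (p : R) (r : outcome).

Lemma sum_bern_prob p : \sum_r bern_prob p r = 1.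
Proof.
rewrite /bern_prob -(bigA_distr_bigA (fun _ (b : bool) => if b then p else 1 - p)).
by rewrite big1 // => j _; rewrite big_bool /= subrKC.
Qed.

Lemma bern_prob_gt0 p r : 0 < p < 1 -> 0 < bern_prob p r.
Proof. by move=> /andP[p0 p1]; apply: prodr_gt0 => j _; case: (r j); rewrite ?subr_gt0. Qed.

Lemma expectation_rew p (j : 'I_G) : \sum_r bern_prob p r * rew r j = p.
Proof.
pose F k (b : bool) : R := (if b then p else 1 - p) * (if k == j then b%:R else 1).
transitivity (\sum_(r : outcome) \prod_k F k (r k)).
  apply: eq_bigr => r _; rewrite big_split /=; congr (_ * _).
  rewrite (bigD1 j) //= eqxx big1 ?mulr1 //.
  by move=> k /negbTE ->.
rewrite -(bigA_distr_bigA F) (bigD1 j) //= [X in _ * X]big1 => [|k /negbTE kj].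
  by rewrite big_bool /F /= eqxx !mulr1 mulr0 addr0.
by rewrite big_bool /F /= kj !mulr1 subrKC.
Qed.

Lemma expectation_phat p : (0 < G)%N -> \sum_r bern_prob p r * phat r = p.
Proof.
move=> G_gt0; have G_neq0 : G%:R != 0 :> R by rewrite pnatr_eq0 -lt0n.
transitivity ((\sum_(j < G) \sum_r bern_prob p r * rew r j) / G%:R).
  rewrite exchange_big mulr_suml; apply: eq_bigr => r _.
  by rewrite /phat /nsucc natr_sum mulrA mulr_sumr.
under eq_bigr do rewrite expectation_rew.
by rewrite sumr_const card_ord -[p *+ G]mulr_natr mulfK.
Qed.

Definition const_outcome (b : bool) : outcome := [ffun => b].

Lemma nsucc_const b : nsucc (const_outcome b) = (b * G)%N.
Proof.
rewrite /nsucc (eq_bigr (fun _ => nat_of_bool b)) => [|j _]; last by rewrite ffunE.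
by rewrite sum_nat_const card_ord mulnC.
Qed.

Lemma bern_prob_const p b :
  bern_prob p (const_outcome b) = (if b then p else 1 - p) ^+ G.
Proof.
rewrite /bern_prob (eq_bigr (fun _ => if b then p else 1 - p)) => [|j _].
  by rewrite prodr_const card_ord.
by rewrite ffunE.
Qed.

Lemma nsucc_eq0 r : (nsucc r == 0)%N = (r == const_outcome false).
Proof.
rewrite /nsucc sum_nat_eq0; apply/forallP/eqP => [r0 | ->] /=.
  by apply/ffunP => j; rewrite ffunE; move: (r0 j); case: (r j).
by move=> j; rewrite ffunE.
Qed.

Lemma nsucc_eqG r : (nsucc r == G) = (r == const_outcome true).
Proof.
have -> : (nsucc r == G) = (nsucc [ffun j => ~~ r j] == 0)%N.
  have : (nsucc [ffun j => ~~ r j] + nsucc r)%N = G.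
    rewrite /nsucc -big_split /= (eq_bigr (fun _ => 1%N)) ?sum1_card ?card_ord //.
    by move=> j _; rewrite ffunE; case: (r j).
  lia.
rewrite nsucc_eq0; apply/eqP/eqP => /ffunP rE; apply/ffunP => j;
  by move: (rE j); rewrite !ffunE; case: (r j).
Qed.

Lemma nsucc_le r : (nsucc r <= G)%N.
Proof.
rewrite -[X in (_ <= X)%N]card_ord -sum1_card.
by apply: leq_sum => j _; case: (r j).
Qed.

Lemma nondegN r :
  ~~ nondeg r = (r == const_outcome false) || (r == const_outcome true).
Proof.
rewrite -nsucc_eq0 -nsucc_eqG /nondeg.
by have := nsucc_le r; case: (nsucc r) => [|n] /=; lia.
Qed.

Lemma sum_nondeg (F : outcome -> R) : (0 < G)%N ->
  \sum_(r | nondeg r) F r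
    = \sum_r F r - F (const_outcome false) - F (const_outcome true).
Proof.
move=> G_gt0; have const_neq : const_outcome false != const_outcome true.
  by apply/eqP => /ffunP /(_ (Ordinal G_gt0)); rewrite !ffunE.
rewrite [\sum_r F r](bigID nondeg) /= (eq_bigl _ _ nondegN).
rewrite [X in _ = _ + X - _ - _](bigD1 (const_outcome false)) ?eqxx //=.
rewrite [X in _ + (_ + X)](eq_bigl (pred1 (const_outcome true))) => [|r].
  by rewrite big_pred1_eq; ring.
by case: eqP => [->|_] /=; rewrite ?andbT ?(negbTE const_neq).
Qed.

Lemma phat_const b : (0 < G)%N -> phat (const_outcome b) = b%:R.
Proof.
move=> G_gt0; rewrite /phat nsucc_const natrM mulfK //.
by rewrite pnatr_eq0 -lt0n.
Qed.

Lemma Ahat_sub_Aexp p (i : 'I_G) r : Ahat i r - Aexp p i r = p - phat r.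
Proof. by rewrite /Ahat /Aexp; ring. Qed.

Lemma sum_nondeg_advantage_gap p (i : 'I_G) : (0 < G)%N ->
  \sum_(r | nondeg r) bern_prob p r * (Ahat i r - Aexp p i r)
    = p ^+ G * (1 - p) - p * (1 - p) ^+ G.
Proof.
move=> G_gt0; under eq_bigr do rewrite Ahat_sub_Aexp mulrBr.
rewrite sum_nondeg // sumrB -mulr_suml sum_bern_prob expectation_phat //.
by rewrite !bern_prob_const !phat_const //=; ring.
Qed.

Lemma cond_exp_advantage_gap p (i : 'I_G) : (0 < G)%N ->
  cond_exp p nondeg (fun r => Ahat i r - Aexp p i r)
    = (p ^+ G * (1 - p) - p * (1 - p) ^+ G) / \sum_(r | nondeg r) bern_prob p r.
Proof. by move=> G_gt0; rewrite /cond_exp sum_nondeg_advantage_gap. Qed.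

Lemma indicator_nondeg (i : 'I_G) : (2 <= G)%N -> nondeg [ffun j => j == i].
Proof.
move=> G_ge2; rewrite /nondeg.
have -> : nsucc [ffun j => j == i] = 1%N.
  rewrite /nsucc (bigD1 i) //= ffunE eqxx big1 // => j /negbTE ji.
  by rewrite ffunE ji.
lia.
Qed.

Lemma nondeg_prob_gt0 p : (2 <= G)%N -> 0 < p < 1 ->
  0 < \sum_(r | nondeg r) bern_prob p r.
Proof.
move=> G_ge2 p01; have G_gt0 : (0 < G)%N by lia.
rewrite (bigD1 _ (indicator_nondeg (Ordinal G_gt0) G_ge2)) /=.
rewrite ltr_wpDr ?bern_prob_gt0 //.
by apply: sumr_ge0 => r _; rewrite ltW ?bern_prob_gt0.
Qed.

End BernoulliGroup.

Theorem theorem1 (R : realFieldType) (G : nat) (p : R)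
  (hG : (2 <= G)%N) (hp0 : 0 < p) (hp1 : p < 1) (i : 'I_G) :
  let E := @cond_exp R G p (@nondeg G) (fun r => @Ahat R G i r - @Aexp R G p i r) in
  (p < 1 / 2 -> E < 0) /\ (1 / 2 < p -> 0 < E) /\ (E = 0 <-> p = 1 / 2).
Proof.
move=> E; rewrite {}/E cond_exp_advantage_gap; last by lia.
set N := _ - _; set D := \sum_(r | _) _.
have invD_gt0 : 0 < D^-1 by rewrite invr_gt0 nondeg_prob_gt0 // hp0.
have E_neg : p < 1 / 2 -> N / D < 0.
  move=> lt_p_half; rewrite pmulr_llt0 // subr_lt0.
  by rewrite ltr_expr_mul_swap //; lra.
have E_pos : 1 / 2 < p -> 0 < N / D.
  move=> gt_half_p; rewrite pmulr_lgt0 // subr_gt0 mulrC [p ^+ G * _]mulrC.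
  by rewrite ltr_expr_mul_swap //; lra.
split=> //; split=> //; split=> [E0 | p_half].
- by case: (ltrgtP p (1 / 2)) => // [/E_neg | /E_pos]; rewrite E0 ltxx.
- have half_sub : 1 - p = p by rewrite p_half; field.
  by rewrite /N half_sub [p ^+ G * p]mulrC subrr mul0r.
Qed.
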